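(* Let $\Delta:M_n\to M_n$ be a weak-2-local derivation, let $p_1,\ldots,p_n$ be mutually orthogonal minimal projections in $M_n$, and let $q=1-p_n$. Let $R\subseteq\{1,\ldots,n-1\}$ and set $r=\sum_{i\in R}p_i$ if $R\neq\emptyset$ and $r=0$ if $R=\emptyset$. Assume $\Delta(qaq+rap_n)=0$ for every $a\in M_n$. Then $\Delta(qaq+rap_n+\lambda e_{kn})=p_k\Delta(qaq+rap_n+\lambda e_{kn})p_n$ for every $a\in M_n$, $\lambda\in\mathbb{C}$ and $1\le k\le n-1$.
   Context: $M_n=M_n(\mathbb{C})$. For $i,j$, $e_{ij}$ is the unique minimal partial isometry in $M_n$ with $e_{ij}^*e_{ij}=p_j$ and $e_{ij}e_{ij}^*=p_i$. A derivation on $M_n$ is a linear map $D$ with $D(ab)=D(a)b+aD(b)$. A (not necessarily linear) map $\Delta:M_n\to M_n$ is a weak-2-local derivation if for every $a,b\in M_n$ and every $\phi\in M_n^*$ there exists a derivation $D_{a,b,\phi}$ such that $\phi\Delta(a)=\phi D_{a,b,\phi}(a)$ and $\phi\Delta(b)=\phi D_{a,b,\phi}(b)$. *)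

From HB Require Import structures.
From mathcomp Require Import all_boot all_order all_algebra.
From mathcomp Require Import complex.
From mathcomp Require Import reals.
Set Implicit Arguments. Unset Strict Implicit. Unset Printing Implicit Defensive.
Import Order.TTheory GRing.Theory Num.Theory.
Local Open Scope ring_scope.

Section Defs.
Variables (R : realType) (n : nat).
Local Notation C := (R[i]).
Local Notation M := ('M[C]_n.+1).

Definition adj (a : M) : M := (map_mx (@conjc R) a)^T.

Definition is_projection (p : M) : Prop := adj p = p /\ p * p = p.

Definition is_minimal_projection (p : M) : Prop :=
  is_projection p /\ p <> 0 /\
  forall q : M, is_projection q -> q * p = q -> q = 0 \/ q = p.

Definition is_linear_functional (phi : M -> C) : Prop :=
  forall (c : C) (x y : M), phi (c *: x + y) = c * phi x + phi y.

Definition is_derivation (D : M -> M) : Prop :=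
  (forall (c : C) (x y : M), D (c *: x + y) = c *: D x + D y) /\
  (forall x y : M, D (x * y) = D x * y + x * D y).

Definition weak_2_local_derivation (Delta : M -> M) : Prop :=
  forall (a b : M) (phi : M -> C), is_linear_functional phi ->
    exists D : M -> M, is_derivation D /\
      phi (Delta a) = phi (D a) /\ phi (Delta b) = phi (D b).
End Defs.

(* Put [s = q a q + r a p_n] and [X = Delta (s + lambda e)].  If [q t q = t] and
   [t p_n = 0], then [s - t] is again of the form [q a' q + r a' p_n], so
   [Delta (s - t) = 0].  Testing the weak-2-local property at the pair
   [(s + lambda e, s - t)] against the functional [tr (h _)] produces a derivation,
   which is inner, [D = [d, _]]; hence [tr (h X) = tr ([lambda e + t, h] d) = 0]
   whenever [h] commutes with [lambda e + t].  With [K = p_k], [P = p_n] and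
   [Q = 1 - K - P], well-chosen pairs [(t, h)] make [tr (U g V X)] vanish for all
   [g], which kills every Peirce corner [V X U] of [X] except [K X P]. *)

From mathcomp Require Import all_boot all_algebra.
From mathcomp Require Import complex reals.
Set Implicit Arguments. Unset Strict Implicit. Unset Printing Implicit Defensive.
Import GRing.Theory Num.Theory.
Local Open Scope ring_scope.

Section MatrixUnits.
Variables (F : comNzRingType) (n : nat).
Local Notation M := 'M[F]_n.+1.
Local Notation E := (@delta_mx F n.+1 n.+1).

Lemma delta_mx_mul i j k l : E i j * E k l = E i l *+ (j == k).
Proof. by rewrite -mulmxE mul_delta_mx_cond. Qed.

Lemma mxtrace_mulrC (A B : M) : \tr (A * B) = \tr (B * A).
Proof. exact: mxtrace_mulC. Qed.

Lemma mxtrace_delta_mul (A : M) i j : \tr (E j i * A) = A i j.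
Proof.
rewrite /mxtrace (bigD1 j) //= big1 ?addr0.
  rewrite mxE (bigD1 i) //= big1 ?addr0; first by rewrite mxE !eqxx mul1r.
  by move=> k /negPf ki; rewrite mxE ki andbF mul0r.
move=> k /negPf kj; rewrite mxE big1 // => l _.
rewrite mxE; case: eqP => [lj|]; last by rewrite mul0r.
by move: kj; rewrite lj eqxx.
Qed.

Lemma mxtrace_mul_eq0 (A : M) : (forall g : M, \tr (g * A) = 0) -> A = 0.
Proof. by move=> A0; apply/matrixP => i j; rewrite mxE -mxtrace_delta_mul. Qed.

Lemma mxtrace_sandwich_eq0 (U V A : M) :
  (forall g : M, \tr (U * g * V * A) = 0) -> V * A * U = 0.
Proof.
move=> A0; apply: mxtrace_mul_eq0 => g.
by rewrite !mulrA mxtrace_mulrC !mulrA.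
Qed.

Lemma linear_delta_mx_expand (f : M -> M) :
    (forall c x y, f (c *: x + y) = c *: f x + f y) ->
  forall z, f z = \sum_i \sum_j z i j *: f (E i j).
Proof.
move=> f_lin z.
have f0 : f 0 = 0.
  by apply: (addrI (f 0)); rewrite addr0 -{1}[f 0]scale1r -f_lin scaler0 add0r.
have fD : {morph f : x y / x + y} by move=> x y; rewrite -{1}[x]scale1r f_lin scale1r.
rewrite {1}(matrix_sum_delta z) (big_morph f fD f0); apply: eq_bigr => i _.
rewrite (big_morph f fD f0); apply: eq_bigr => j _.
by rewrite -[_ *: _]addr0 f_lin f0 addr0.
Qed.

Lemma linear_delta_mx_ext (f g : M -> M) :
    (forall c x y, f (c *: x + y) = c *: f x + f y) ->
    (forall c x y, g (c *: x + y) = c *: g x + g y) ->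
  (forall i j, f (E i j) = g (E i j)) -> f =1 g.
Proof.
move=> f_lin g_lin fg z; rewrite !linear_delta_mx_expand //.
by apply: eq_bigr => i _; apply: eq_bigr => j _; rewrite fg.
Qed.
End MatrixUnits.

Lemma mulrA_eq (T : pzSemiRingType) (x y z : T) :
  x * y = z -> forall w, x * (y * w) = z * w.
Proof. by move=> xyz w; rewrite mulrA xyz. Qed.

Lemma compression_shift (T : pzRingType) (q r p a t u : T) :
  q * t * q = t -> t * p = 0 ->
  q * a * q + r * a * p + u - (q * (a - t) * q + r * (a - t) * p) = u + t.
Proof.
move=> tq tp; rewrite !(mulrBr, mulrBl) tq -(mulrA r t) tp mulr0 subr0.
by rewrite (addrAC _ (- t)) opprB addrCA addrAC subrr add0r addrC.
Qed.

(* Products are normalized to right-associated form, so each relation [x * y = z]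
   in [rules] also needs its [mulrA_eq] variant to fire inside longer products. *)
Ltac mul_simpl rules :=
  repeat progress rewrite ?(mulrDl, mulrDr, mulrBl, mulrBr, mul1r, mulr1, mul0r, mulr0)
    -?mulrA -?scalerAl -?scalerAr ?rules
    ?(scaler0, addr0, add0r, subr0, sub0r, oppr0, subrr, mulrN, mulNr, scalerN, opprK).

Section PeirceAnnihilation.
Variables (F : comNzRingType) (m : nat).
Local Notation M := 'M[F]_m.+1.
Variables (K P Q e e' X : M) (lambda : F).
Hypotheses (KK : K * K = K) (PP : P * P = P) (KP : K * P = 0) (PK : P * K = 0)
  (KPQ : K + P + Q = 1).
Hypotheses (Ke : K * e = e) (eP : e * P = e) (ee' : e * e' = K)
  (Pe' : P * e' = e').
Hypothesis trace_annih : forall t h : M, (K + Q) * t * (K + Q) = t -> t * P = 0 ->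
  GRing.comm (lambda *: e + t) h -> \tr (h * X) = 0.

Let QE : Q = 1 - K - P. Proof. by rewrite -KPQ -addrA -opprD (addrC (K + P)) addrK. Qed.
Let QK : Q * K = 0. Proof. by rewrite QE !mulrBl mul1r KK PK subrr subr0. Qed.
Let KQ : K * Q = 0. Proof. by rewrite QE !mulrBr mulr1 KK KP subrr subr0. Qed.
Let QP : Q * P = 0. Proof. by rewrite QE !mulrBl mul1r KP PP subr0 subrr. Qed.
Let PQ : P * Q = 0. Proof. by rewrite QE !mulrBr mulr1 PK PP subr0 subrr. Qed.
Let QQ : Q * Q = Q. Proof. by rewrite {2}QE !mulrBr mulr1 QK QP !subr0. Qed.
Let Pe : P * e = 0. Proof. by rewrite -Ke mulrA PK mul0r. Qed.
Let eK : e * K = 0. Proof. by rewrite -eP -mulrA PK mulr0. Qed.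
Let ee : e * e = 0. Proof. by rewrite -{1}eP -mulrA Pe mulr0. Qed.
Let Qe : Q * e = 0. Proof. by rewrite -Ke mulrA QK mul0r. Qed.
Let eQ : e * Q = 0. Proof. by rewrite -eP -mulrA PQ mulr0. Qed.

Let rules := (KK, mulrA_eq KK, PP, mulrA_eq PP, QQ, mulrA_eq QQ,
  KP, mulrA_eq KP, PK, mulrA_eq PK, KQ, mulrA_eq KQ, QK, mulrA_eq QK,
  PQ, mulrA_eq PQ, QP, mulrA_eq QP,
  (Ke, mulrA_eq Ke, eP, mulrA_eq eP, Pe, mulrA_eq Pe, eK, mulrA_eq eK,
  ee, mulrA_eq ee, Qe, mulrA_eq Qe, eQ, mulrA_eq eQ,
  ee', mulrA_eq ee', Pe', mulrA_eq Pe')).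

Let compl_corner_eq0 : (P + Q) * X * (K + Q) = 0.
Proof.
apply: mxtrace_sandwich_eq0 => g; apply: (trace_annih (t := 0)).
- by mul_simpl rules.
- by rewrite mul0r.
- by rewrite /GRing.comm; mul_simpl rules.
Qed.

Let corner_eq0 (U V : M) : U * (P + Q) = U -> (K + Q) * V = V -> U * X * V = 0.
Proof.
move=> <- <-.
rewrite -!mulrA (mulrA X) (mulrA (P + Q)) (mulrA (P + Q) X).
by rewrite compl_corner_eq0 mul0r mulr0.
Qed.

Let PXK : P * X * K = 0. Proof. by apply: corner_eq0; mul_simpl rules. Qed.
Let PXQ : P * X * Q = 0. Proof. by apply: corner_eq0; mul_simpl rules. Qed.
Let QXK : Q * X * K = 0. Proof. by apply: corner_eq0; mul_simpl rules. Qed.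
Let QXQ : Q * X * Q = 0. Proof. by apply: corner_eq0; mul_simpl rules. Qed.

Let QXP : Q * X * P = 0.
Proof.
apply: mxtrace_sandwich_eq0 => g.
have trQX : \tr (Q * X) = 0 by rewrite -QQ -mulrA mxtrace_mulrC QXQ mxtrace0.
have : \tr ((P * g * Q - lambda *: Q) * X) = 0.
  by apply: (trace_annih (t := e * (P * g * Q))); rewrite ?/GRing.comm; mul_simpl rules.
by rewrite mulrBl raddfB /= -scalerAl mxtraceZ trQX mulr0 subr0.
Qed.

Let PXP : P * X * P = 0.
Proof.
apply: mxtrace_sandwich_eq0 => g.
have tregPX : \tr (e * g * P * X) = 0.
  by rewrite -Ke -!mulrA mxtrace_mulrC -!mulrA (mulrA P) PXK !mulr0 mxtrace0.
have : \tr ((P * g * P - lambda *: (e * g * P)) * X) = 0.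
  by apply: (trace_annih (t := K)); rewrite ?/GRing.comm; mul_simpl rules.
by rewrite mulrBl raddfB /= -scalerAl mxtraceZ tregPX mulr0 subr0.
Qed.

Let KXK : K * X * K = 0.
Proof.
apply: mxtrace_sandwich_eq0 => g.
have tre'X : \tr (e' * K * g * K * e * X) = 0.
  by rewrite -Pe' -eP -!mulrA mxtrace_mulrC -!mulrA (mulrA P) PXP !mulr0 mxtrace0.
have : \tr ((K * g * K + e' * K * g * K * e) * X) = 0.
  by apply: (trace_annih (t := 0)); rewrite ?/GRing.comm; mul_simpl rules.
by rewrite mulrDl mxtraceD tre'X addr0.
Qed.

Let KXQ : K * X * Q = 0.
Proof.
apply: mxtrace_sandwich_eq0 => g.
have treX : \tr (e * X) = 0.
  by rewrite -Ke -eP -!mulrA mxtrace_mulrC -!mulrA (mulrA P) PXK !mulr0 mxtrace0.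
have : \tr ((Q * g * K + lambda *: e) * X) = 0.
  by apply: (trace_annih (t := Q * g * K)); rewrite ?/GRing.comm; mul_simpl rules.
by rewrite mulrDl mxtraceD -scalerAl mxtraceZ treX mulr0 addr0.
Qed.

Lemma peirce_annihilation : X = K * X * P.
Proof.
rewrite -{1}[X]mul1r -{1}[X]mulr1 -KPQ !(mulrDl, mulrDr).
by rewrite !mulrA PXK PXQ QXK QXQ QXP PXP KXK KXQ !(addr0, add0r).
Qed.
End PeirceAnnihilation.

Section ComplexMatrices.
Variables (R : realType) (n : nat).
Local Notation M := 'M[R[i]]_n.+1.
Local Notation E := (@delta_mx R[i] n.+1 n.+1).

Section Derivation.
Variables (D : M -> M).
Hypothesis derD : is_derivation D.

Lemma derivationZ c x : D (c *: x) = c *: D x.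
Proof.
have D0 : D 0 = 0.
  by apply: (addrI (D 0)); rewrite addr0 -{1}[D 0]scale1r -derD.1 scaler0 add0r.
by rewrite -[c *: x]addr0 derD.1 D0 addr0.
Qed.

Lemma derivationB x y : D (x - y) = D x - D y.
Proof. by rewrite addrC -scaleN1r derD.1 scaleN1r addrC. Qed.

Definition derivation_mx : M := \sum_i D (E i 0) * E 0 i.

Lemma derivation_delta_mx j l :
  D (E j l) = derivation_mx * E j l - E j l * derivation_mx.
Proof.
have dE : derivation_mx * E j l = D (E j 0) * E 0 l.
  rewrite mulr_suml (bigD1 j) //= big1 ?addr0.
    by rewrite -mulrA delta_mx_mul eqxx.
  by move=> i /negPf ij; rewrite -mulrA delta_mx_mul ij mulr0n mulr0.
have Ed : E j l * derivation_mx = D (E j 0) * E 0 l - D (E j l).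
  rewrite mulr_sumr.
  under eq_bigr => i _.
    rewrite mulrA.
    have -> : E j l * D (E i 0) = D (E j 0 *+ (l == i)) - D (E j l) * E i 0.
      by rewrite -delta_mx_mul derD.2 addrAC subrr add0r.
    rewrite mulrBl -mulrA delta_mx_mul eqxx mulr1n.
  over.
  rewrite sumrB -mulr_sumr -mx1_sum_delta mulr1 (bigD1 l) //= eqxx mulr1n.
  rewrite big1 ?addr0 // => i /negPf li.
  by rewrite eq_sym li mulr0n -(scale0r (0 : M)) derivationZ !scale0r mul0r.
by rewrite dE Ed opprB addrC subrK.
Qed.

Lemma derivation_inner x : D x = derivation_mx * x - x * derivation_mx.
Proof.
move: x; apply: (linear_delta_mx_ext derD.1 _ derivation_delta_mx) => c x y.
by rewrite mulrDr mulrDl -scalerAr -scalerAl opprD addrACA scalerBr.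
Qed.
End Derivation.

Lemma weak_2_local_derivation_trace (Delta : M -> M) (s x h : M) :
  weak_2_local_derivation Delta -> Delta s = 0 -> GRing.comm (x - s) h ->
  \tr (h * Delta x) = 0.
Proof.
move=> W2L Delta_s comm_h.
have trh_lin : is_linear_functional (fun z : M => \tr (h * z)).
  by move=> c u v; rewrite mulrDr -scalerAr mxtraceD mxtraceZ.
have [D [derD [-> Ds]]] := W2L x s _ trh_lin.
have trhDs : \tr (h * D s) = 0 by rewrite -Ds Delta_s mulr0 mxtrace0.
rewrite -[LHS]subr0 -trhDs -raddfB /= -mulrBr -(derivationB derD).
rewrite (derivation_inner derD) mulrBr raddfB /= mulrA mxtrace_mulrC !mulrA comm_h.
by rewrite subrr.
Qed.

Lemma adjM (x y : M) : adj (x * y) = adj y * adj x.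
Proof. by rewrite /adj -!mulmxE map_mxM trmx_mul. Qed.

Lemma adjK (x : M) : adj (adj x) = x.
Proof. by apply/matrixP => i j; rewrite !mxE conjcK. Qed.

Lemma adjB (x y : M) : adj (x - y) = adj x - adj y.
Proof. by apply/matrixP => i j; rewrite !mxE rmorphB. Qed.

Lemma adj_mul_eq0 (x : M) : adj x * x = 0 -> x = 0.
Proof.
move=> x0; apply/matrixP => i j; rewrite mxE.
have : (adj x * x) j j = 0 by rewrite x0 mxE.
rewrite -mulmxE mxE.
under eq_bigr => k _ do rewrite !mxE mulrC -sqr_normc.
move/psumr_eq0P => /(_ (fun k _ => exprn_ge0 2 (normr_ge0 _)) i isT) /eqP.
by rewrite expf_eq0 /= normr_eq0 => /eqP.
Qed.

Lemma partial_isometry_mulr (e p : M) :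
  is_projection p -> adj e * e = p -> e * p = e.
Proof.
move=> [adj_p pp] ee_p; apply/eqP; rewrite -subr_eq0; apply/eqP/adj_mul_eq0.
rewrite adjB adjM adj_p mulrBl !mulrBr -!mulrA (mulrA_eq ee_p) ee_p !pp.
by rewrite !subrr.
Qed.

Lemma partial_isometry_mull (e p : M) :
  is_projection p -> e * adj e = p -> p * e = e.
Proof.
move=> [adj_p pp] ee_p.
have : adj e * p = adj e by apply: partial_isometry_mulr; rewrite ?adjK.
by move/(congr1 (@adj R n)); rewrite adjM adj_p !adjK.
Qed.
End ComplexMatrices.

(* Dimension n.+1 (>= 1); p_n is p ord_max; R0 is a subset of {1,..,n-1};
   e is any minimal partial isometry e_{kn} (e^* e = p_n, e e^* = p_k). *)
Theorem lemma2p4 (R : realType) (n : nat)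
  (Delta : 'M[R[i]]_n.+1 -> 'M[R[i]]_n.+1)
  (p : 'I_n.+1 -> 'M[R[i]]_n.+1)
  (R0 : {set 'I_n.+1}) :
  weak_2_local_derivation Delta ->
  (forall i, is_minimal_projection (p i)) ->
  (forall i j, i != j -> p i * p j = 0) ->
  ord_max \notin R0 ->
  let q := 1 - p ord_max in
  let r := \sum_(i in R0) p i in
  (forall a : 'M[R[i]]_n.+1, Delta (q * a * q + r * a * p ord_max) = 0) ->
  forall (a : 'M[R[i]]_n.+1) (lambda : R[i]) (k : 'I_n.+1)
         (e : 'M[R[i]]_n.+1),
    k != ord_max ->
    adj e * e = p ord_max -> e * adj e = p k ->
    Delta (q * a * q + r * a * p ord_max + lambda *: e)
    = p k * Delta (q * a * q + r * a * p ord_max + lambda *: e) * p ord_max.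
Proof.
move=> W2L minp orthp _ q r Delta_s a lambda k e k_max eeP eeK.
set P := p ord_max in q Delta_s eeP *; set K := p k in eeK *.
have [projP _] := minp ord_max; have [projK _] := minp k.
have KP : K * P = 0 := orthp _ _ k_max.
have PK : P * K = 0 by apply: orthp; rewrite eq_sym.
have KPQ : K + P + (q - K) = 1 by rewrite addrC addrA subrK subrK.
have eP : e * P = e := partial_isometry_mulr projP eeP.
have Ke : K * e = e := partial_isometry_mull projK eeK.
have Pe' : P * adj e = adj e by rewrite -[in LHS](projP.1 : adj P = P) -adjM eP.
apply: (peirce_annihilation (lambda := lambda) projK.2 projP.2 KP PK KPQ Ke eP eeK Pe')
  => t h.
rewrite (addrC K) subrK => tq tP comm_th.
apply: (weak_2_local_derivation_trace W2L (Delta_s (a - t))).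
by rewrite compression_shift.
Qed.
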